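(* Let $X$ be a nonempty set and $d$ a reflexive triangular symmetric on $X$ such that $(X,d)$ is 0-complete. Let $T:X\to X$, $G\in\{M_1,M_2,M_3\}$, and suppose $d(Tx,Ty)\le\varphi(G(x,y))$ for all $x,y\in X$, for some nearly right admissible asymptotic normal function $\varphi:[0,\infty)\to[0,\infty)$. Then $T$ is a global Picard operator (modulo $d$).
   Context: A symmetric on $X$ is a map $d:X\times X\to[0,\infty)$ with $d(x,y)=d(y,x)$; it is reflexive triangular if $d(x,z)+d(y,y)\le d(x,y)+d(y,z)$ for all $x,y,z$. A sequence $(x_n)$ $0d$-converges to $x$ if $d(x_n,x)\to0$; it is $0d$-convergent if such $x$ exists; it is $0d$-Cauchy if for every $\varepsilon>0$ there is $j$ with $d(x_m,x_n)<\varepsilon$ whenever $j\le m<n$. $(X,d)$ is 0-complete if every $0d$-Cauchy sequence is $0d$-convergent. A nonempty $Y\subseteq X$ is $d$-singleton if $d(y_1,y_2)=0$ for all $y_1,y_2\in Y$. $\mathrm{Fix}(T;d)=\{z: d(z,Tz)=0\}$. $T$ is a global Picard operator (modulo $d$) if for every $x\in X$ the sequence $(T^nx)$ is $0d$-convergent and every point to which it $0d$-converges lies in $\mathrm{Fix}(T;d)$, and moreover $\mathrm{Fix}(T;d)$ is $d$-singleton. Notation: $M_1(x,y)=d(x,y)$, $H(x,y)=\max\{d(x,Tx),d(y,Ty)\}$, $L(x,y)=\frac12[d(x,Ty)+d(Tx,y)]$, $M_2=\max\{M_1,H\}$, $M_3=\max\{M_1,H,L\}$. $\varphi$ is normal if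 $\varphi(0)=0$ and $\varphi(t)<t$ for $t>0$; asymptotic normal if normal and every sequence $(r_n)$ in $[0,\infty)$ with $r_{n+1}\le\varphi(r_n)$ for all $n$ tends to $0$; nearly right admissible if normal and there is a countable $Q\subseteq(0,\infty)$ with $\max\{\limsup_{t\to s+}\varphi(t),\varphi(s)\}<s$ for all $s\in(0,\infty)\setminus Q$. *)

From Stdlib Require Import Reals.
Open Scope R_scope.

Section Defs.
Context {X : Type}.

Definition is_symmetric (d : X -> X -> R) : Prop :=
  forall x y, 0 <= d x y /\ d x y = d y x.

Definition reflexive_triangular (d : X -> X -> R) : Prop :=
  forall x y z, d x z + d y y <= d x y + d y z.

Definition zd_converges_to (d : X -> X -> R) (u : nat -> X) (x : X) : Prop :=
  Un_cv (fun n => d (u n) x) 0.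

Definition zd_convergent (d : X -> X -> R) (u : nat -> X) : Prop :=
  exists x, zd_converges_to d u x.

Definition zd_Cauchy (d : X -> X -> R) (u : nat -> X) : Prop :=
  forall eps, eps > 0 -> exists j : nat,
    forall m n : nat, (j <= m)%nat -> (m < n)%nat -> d (u m) (u n) < eps.

Definition zero_complete (d : X -> X -> R) : Prop :=
  forall u : nat -> X, zd_Cauchy d u -> zd_convergent d u.

Definition d_singleton (d : X -> X -> R) (Y : X -> Prop) : Prop :=
  (exists y, Y y) /\ forall y1 y2, Y y1 -> Y y2 -> d y1 y2 = 0.

Definition Fix (T : X -> X) (d : X -> X -> R) : X -> Prop :=
  fun z => d z (T z) = 0.

Definition global_Picard (T : X -> X) (d : X -> X -> R) : Prop :=
  (forall x : X,
     zd_convergent d (fun n => Nat.iter n T x) /\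
     forall z, zd_converges_to d (fun n => Nat.iter n T x) z -> Fix T d z) /\
  d_singleton d (Fix T d).

Definition M1 (d : X -> X -> R) (x y : X) : R := d x y.
Definition Hf (T : X -> X) (d : X -> X -> R) (x y : X) : R :=
  Rmax (d x (T x)) (d y (T y)).
Definition Lf (T : X -> X) (d : X -> X -> R) (x y : X) : R :=
  / 2 * (d x (T y) + d (T x) y).
Definition M2 (T : X -> X) (d : X -> X -> R) (x y : X) : R :=
  Rmax (M1 d x y) (Hf T d x y).
Definition M3 (T : X -> X) (d : X -> X -> R) (x y : X) : R :=
  Rmax (Rmax (M1 d x y) (Hf T d x y)) (Lf T d x y).

End Defs.

Inductive Gchoice := G_M1 | G_M2 | G_M3.

Definition Gfun {X : Type} (g : Gchoice) (T : X -> X) (d : X -> X -> R) : X -> X -> R :=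
  match g with
  | G_M1 => M1 d
  | G_M2 => M2 T d
  | G_M3 => M3 T d
  end.

(** phi : [0,oo) -> [0,oo), represented as a function R -> R mapping [0,oo) into [0,oo). *)
Definition maps_nonneg (phi : R -> R) : Prop :=
  forall t, 0 <= t -> 0 <= phi t.

Definition normal (phi : R -> R) : Prop :=
  phi 0 = 0 /\ forall t, t > 0 -> phi t < t.

Definition asymptotic_normal (phi : R -> R) : Prop :=
  normal phi /\
  forall r : nat -> R, (forall n, 0 <= r n) -> (forall n, r (S n) <= phi (r n)) ->
    Un_cv r 0.

(** max { limsup_{t -> s+} phi t , phi s } < s, written out:
    phi s < s and there are c < s and delta > 0 with phi t <= c on (s, s+delta). *)
Definition right_adm_at (phi : R -> R) (s : R) : Prop :=
  phi s < s /\
  exists c delta, c < s /\ delta > 0 /\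
    forall t, s < t < s + delta -> phi t <= c.

(** A countable Q ⊆ (0,oo) is represented as (contained in) the range of a sequence q. *)
Definition nearly_right_admissible (phi : R -> R) : Prop :=
  normal phi /\
  exists q : nat -> R,
    forall s, s > 0 -> (forall n, q n <> s) -> right_adm_at phi s.

From Stdlib Require Import Reals Lra Lia Classical.
Open Scope R_scope.

(* The contraction gives d(T^(n+1) x, T^(n+2) x) <= phi(d(T^n x, T^(n+1) x)), so asymptotic
   normality makes consecutive distances along an orbit tend to 0.  If an orbit were not
   0d-Cauchy, some distance d(x_m, x_k) would cross a level s from below while the consecutive
   steps are tiny; choosing s outside the countable exceptional set, phi is bounded by some
   c < s just to the right of s, and the contraction at the crossing gives s <= c + (small).
   0-completeness then yields a limit, the contraction at orbit points close to it shows that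
   it is a fixed point, and two fixed points are at distance 0 because phi(t) < t. *)

Definition trisect (h : R) (p : R * R) : R * R :=
  let (a, b) := p in
  if Rle_dec a h then
    if Rle_dec h (a + (b - a) / 3) then (b - (b - a) / 3, b) else (a, a + (b - a) / 3)
  else (a, a + (b - a) / 3).

Lemma trisect_spec h a b : a < b ->
  a <= fst (trisect h (a, b)) /\ fst (trisect h (a, b)) < snd (trisect h (a, b)) /\
  snd (trisect h (a, b)) <= b /\
  ~ (fst (trisect h (a, b)) <= h <= snd (trisect h (a, b))).
Proof.
  intros Hab; unfold trisect.
  destruct (Rle_dec a h); [destruct (Rle_dec h (a + (b - a) / 3))|]; simpl;
    repeat split; try lra; intros [? ?]; lra.
Qed.

Fixpoint nested_intervals (q : nat -> R) (a b : R) (n : nat) : R * R :=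
  match n with
  | O => (a, b)
  | S k => trisect (q k) (nested_intervals q a b k)
  end.

Section NestedIntervals.
Variables (q : nat -> R) (a b : R).
Hypothesis a_lt_b : a < b.

Lemma nested_intervals_lt n : fst (nested_intervals q a b n) < snd (nested_intervals q a b n).
Proof.
  induction n as [|n IH]; simpl; [exact a_lt_b|].
  destruct (nested_intervals q a b n) as [a' b']; now apply trisect_spec.
Qed.

Lemma nested_intervals_step n :
  fst (nested_intervals q a b n) <= fst (nested_intervals q a b (S n)) /\
  snd (nested_intervals q a b (S n)) <= snd (nested_intervals q a b n) /\
  ~ (fst (nested_intervals q a b (S n)) <= q n <= snd (nested_intervals q a b (S n))).
Proof.
  pose proof (nested_intervals_lt n) as Hlt; simpl.
  destruct (nested_intervals q a b n) as [a' b']; simpl in *.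
  destruct (trisect_spec (q n) a' b' Hlt) as [? [_ [? ?]]]; auto.
Qed.

Lemma nested_intervals_mono n m : (n <= m)%nat ->
  fst (nested_intervals q a b n) <= fst (nested_intervals q a b m) /\
  snd (nested_intervals q a b m) <= snd (nested_intervals q a b n).
Proof.
  induction 1 as [|m _ IH]; [lra|].
  destruct (nested_intervals_step m) as [? [? _]]; lra.
Qed.

Lemma nested_intervals_fst_le_snd n m :
  fst (nested_intervals q a b n) <= snd (nested_intervals q a b m).
Proof.
  destruct (nested_intervals_mono n (n + m)) as [H1 _]; [lia|].
  destruct (nested_intervals_mono m (n + m)) as [_ H2]; [lia|].
  pose proof (nested_intervals_lt (n + m)); lra.
Qed.

(* The supremum of the left endpoints lies in every interval, hence avoids every q n. *)
Lemma exists_avoiding_sequence : exists s, a <= s <= b /\ forall n, q n <> s.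
Proof.
  destruct (completeness (fun x => exists n, x = fst (nested_intervals q a b n)))
    as [l [Hub Hlub]].
  - exists (snd (nested_intervals q a b 0)); intros x [n ->].
    apply nested_intervals_fst_le_snd.
  - exists a, 0%nat; reflexivity.
  - assert (Hlo : forall n, fst (nested_intervals q a b n) <= l) by (intro n; apply Hub; eauto).
    assert (Hhi : forall n, l <= snd (nested_intervals q a b n)).
    { intro n; apply Hlub; intros x [m ->]; apply nested_intervals_fst_le_snd. }
    exists l; split; [exact (conj (Hlo 0%nat) (Hhi 0%nat))|].
    intros n Hn; apply (proj2 (proj2 (nested_intervals_step n))).
    rewrite Hn; auto.
Qed.

End NestedIntervals.

Lemma nearly_right_admissible_gap phi : nearly_right_admissible phi ->
  forall e, 0 < e -> exists s c delta,
    0 < s < e /\ 0 <= c < s /\ 0 < delta /\ forall t, s <= t < s + delta -> phi t <= c.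
Proof.
  intros [_ [q Hq]] e He.
  destruct (exists_avoiding_sequence q (e / 3) (2 * e / 3)) as [s [Hs Hqs]]; [lra|].
  destruct (Hq s ltac:(lra) Hqs) as [Hphis [c [delta [Hcs [Hdelta Hphi]]]]].
  exists s, (Rmax (Rmax c (phi s)) 0), delta; repeat split; try lra.
  - apply Rmax_r.
  - repeat apply Rmax_lub_lt; lra.
  - intros t [[Hst | <-] Ht].
    + apply (Rle_trans _ c); [apply Hphi; lra|].
      eapply Rle_trans; apply Rmax_l.
    + eapply Rle_trans; [apply Rmax_r | apply Rmax_l].
Qed.

Lemma normal_le phi : normal phi -> forall t, 0 <= t -> phi t <= t.
Proof. intros [H0 Hlt] t [Ht | <-]; [apply Rlt_le, Hlt, Ht | lra]. Qed.

Lemma Un_cv_0_eventually_lt (r : nat -> R) : Un_cv r 0 ->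
  forall e, 0 < e -> exists N, forall n, (N <= n)%nat -> r n < e.
Proof.
  intros H e He; destruct (H e He) as [N HN]; exists N; intros n Hn.
  specialize (HN n Hn); unfold R_dist in HN; rewrite Rminus_0_r in HN.
  pose proof (Rle_abs (r n)); lra.
Qed.

Lemma nat_first_crossing (P : nat -> Prop) a b : ~ P a -> P b -> (a <= b)%nat ->
  exists k, (a <= k < b)%nat /\ ~ P k /\ P (S k).
Proof.
  intros Ha Pb Hab; induction b as [|b IH].
  - replace a with 0%nat in Ha by lia; contradiction.
  - destruct (Nat.eq_dec a (S b)) as [-> | Hne]; [contradiction|].
    destruct (classic (P b)) as [Pb' | nPb'].
    + destruct (IH Pb' ltac:(lia)) as [k [? ?]]; exists k; split; [lia | auto].
    + exists b; repeat split; auto; lia.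
Qed.

Section ReflexiveTriangularSymmetric.
Context {X : Type} (d : X -> X -> R).
Hypotheses (d_symmetric : is_symmetric d) (d_refl_tri : reflexive_triangular d).

Lemma d_ge0 x y : 0 <= d x y.
Proof. apply d_symmetric. Qed.

Lemma dC x y : d x y = d y x.
Proof. apply d_symmetric. Qed.

Lemma d_triangle x y z : d x z <= d x y + d y z.
Proof. pose proof (d_refl_tri x y z); pose proof (d_ge0 y y); lra. Qed.

Section Contraction.
Variables (T : X -> X) (g : Gchoice) (phi : R -> R).
Hypothesis phi_normal : normal phi.
Hypothesis contraction : forall x y, d (T x) (T y) <= phi (Gfun g T d x y).

Lemma dist_le_Gfun x y : d x y <= Gfun g T d x y.
Proof.
  destruct g; simpl; unfold M1, M2, M3; [lra | apply Rmax_l |].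
  eapply Rle_trans; apply Rmax_l.
Qed.

Lemma Gfun_le_M3 x y : Gfun g T d x y <= M3 T d x y.
Proof.
  destruct g; simpl; unfold M3, M2.
  - eapply Rle_trans; apply Rmax_l.
  - apply Rmax_l.
  - apply Rle_refl.
Qed.

Lemma Gfun_le_dist_add x y :
  Gfun g T d x y <= d x y + Rmax (d x (T x)) (d y (T y)).
Proof.
  eapply Rle_trans; [apply Gfun_le_M3|]; unfold M3, M1, Hf, Lf.
  pose proof (Rmax_l (d x (T x)) (d y (T y))); pose proof (Rmax_r (d x (T x)) (d y (T y))).
  pose proof (d_ge0 x y); pose proof (d_ge0 x (T x)).
  pose proof (d_triangle x y (T y)); pose proof (d_triangle (T x) x y); rewrite (dC (T x) x) in *.
  repeat apply Rmax_lub; lra.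
Qed.

Lemma Gfun_orbit_step_le a :
  Gfun g T d a (T a) <= Rmax (d a (T a)) (d (T a) (T (T a))).
Proof.
  eapply Rle_trans; [apply Gfun_le_M3|]; unfold M3, M1, Hf, Lf.
  pose proof (Rmax_l (d a (T a)) (d (T a) (T (T a)))).
  pose proof (Rmax_r (d a (T a)) (d (T a) (T (T a)))).
  pose proof (d_refl_tri a (T a) (T (T a))).
  repeat apply Rmax_lub; lra.
Qed.

Lemma Gfun_near_point x z : d x z + d (T x) z <= d z (T z) ->
  Gfun g T d x z = d x z \/ Gfun g T d x z = d z (T z).
Proof.
  intros Hxz.
  pose proof (d_ge0 x z); pose proof (d_ge0 (T x) z).
  pose proof (d_triangle x z (T x)); pose proof (d_triangle x z (T z)).
  rewrite (dC z (T x)) in *.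
  destruct g; simpl; unfold M3, M2, M1, Hf, Lf; [left; reflexivity | right | right];
    apply Rle_antisym.
  - repeat apply Rmax_lub; lra.
  - eapply Rle_trans; [|apply Rmax_r]; apply Rmax_r.
  - repeat apply Rmax_lub; lra.
  - eapply Rle_trans; [|apply Rmax_l]; eapply Rle_trans; [|apply Rmax_r]; apply Rmax_r.
Qed.

Lemma contraction_lt x y : 0 < d (T x) (T y) -> d (T x) (T y) < Gfun g T d x y.
Proof.
  intros Hpos; pose proof (contraction x y) as Hc.
  pose proof (dist_le_Gfun x y); pose proof (d_ge0 x y).
  destruct (Req_dec (Gfun g T d x y) 0) as [E | Hne].
  - rewrite E, (proj1 phi_normal) in Hc; lra.
  - pose proof (proj2 phi_normal (Gfun g T d x y) ltac:(lra)); lra.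
Qed.

Lemma orbit_step_le a : d (T a) (T (T a)) <= d a (T a).
Proof.
  apply Rnot_lt_le; intros Hlt.
  pose proof (contraction_lt a (T a) ltac:(pose proof (d_ge0 a (T a)); lra)).
  pose proof (Gfun_orbit_step_le a); rewrite Rmax_right in * by lra; lra.
Qed.

Lemma orbit_step_le_phi a : d (T a) (T (T a)) <= phi (d a (T a)).
Proof.
  replace (d a (T a)) with (Gfun g T d a (T a)); [apply contraction|].
  pose proof (dist_le_Gfun a (T a)); pose proof (Gfun_orbit_step_le a).
  rewrite Rmax_left in * by apply orbit_step_le; lra.
Qed.

Lemma fixed_points_dist0 z w : Fix T d z -> Fix T d w -> d z w = 0.
Proof.
  unfold Fix; intros Hz Hw.
  assert (Hzw : d z w <= d (T z) (T w)).
  { pose proof (d_triangle z (T z) w); pose proof (d_triangle (T z) (T w) w).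
    rewrite (dC (T w) w) in *; lra. }
  pose proof (Gfun_le_dist_add z w) as HG; rewrite Hz, Hw, Rmax_left in HG by lra.
  destruct (d_ge0 z w) as [Hpos | <-]; [exfalso | reflexivity].
  pose proof (contraction_lt z w ltac:(lra)); lra.
Qed.

Section Orbit.
Variable u : nat -> X.
Hypothesis u_orbit : forall n, u (S n) = T (u n).

Lemma orbit_steps_cv0 : asymptotic_normal phi -> Un_cv (fun n => d (u n) (u (S n))) 0.
Proof.
  intros [_ Hasym]; apply Hasym; intro n; [apply d_ge0|].
  rewrite !u_orbit; apply orbit_step_le_phi.
Qed.

Lemma orbit_zd_Cauchy : nearly_right_admissible phi ->
  Un_cv (fun n => d (u n) (u (S n))) 0 -> zd_Cauchy d u.
Proof.
  intros Hnra Hsteps eps0 Heps0; apply NNPP; intros Hnc.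
  destruct (nearly_right_admissible_gap phi Hnra eps0 Heps0)
    as (s & c & delta & Hs & Hcs & Hdelta & Hgap).
  set (eta := Rmin (delta / 2) ((s - c) / 2)).
  assert (Heta : 0 < eta /\ eta <= delta / 2 /\ eta <= (s - c) / 2).
  { unfold eta; split; [apply Rmin_glb_lt; lra | split; [apply Rmin_l | apply Rmin_r]]. }
  destruct (Un_cv_0_eventually_lt _ Hsteps eta (proj1 Heta)) as [N HN]; cbv beta in HN.
  assert (Hfar : exists m n, (N <= m < n)%nat /\ eps0 <= d (u m) (u n)).
  { apply NNPP; intros H; apply Hnc; exists N; intros m n Hm Hmn.
    apply Rnot_le_lt; intros H'; apply H; exists m, n; auto. }
  destruct Hfar as (m & n & Hmn & Hfar).
  destruct (nat_first_crossing (fun k => s <= d (u m) (u k)) (S m) n)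
    as (k & Hk & Hbelow & Hcross);
    [apply Rlt_not_le; pose proof (HN m ltac:(lia)); lra | lra | lia |].
  cbv beta in Hbelow, Hcross; apply Rnot_le_lt in Hbelow.
  pose proof (HN m ltac:(lia)); pose proof (HN k ltac:(lia)); pose proof (HN (S k) ltac:(lia)).
  assert (Hnear : d (u m) (u (S k)) < s + eta)
    by (pose proof (d_triangle (u m) (u k) (u (S k))); lra).
  assert (HG : Gfun g T d (u m) (u (S k)) < d (u m) (u (S k)) + eta).
  { pose proof (Gfun_le_dist_add (u m) (u (S k))) as HG; rewrite <- !u_orbit in HG.
    enough (Rmax (d (u m) (u (S m))) (d (u (S k)) (u (S (S k)))) < eta) by lra.
    now apply Rmax_lub_lt. }
  pose proof (dist_le_Gfun (u m) (u (S k))).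
  pose proof (contraction (u m) (u (S k))) as Hc; rewrite <- !u_orbit in Hc.
  pose proof (Hgap (Gfun g T d (u m) (u (S k))) ltac:(lra)).
  pose proof (d_triangle (u m) (u (S m)) (u (S k))).
  pose proof (d_triangle (u (S m)) (u (S (S k))) (u (S k))).
  rewrite (dC (u (S (S k))) (u (S k))) in *; lra.
Qed.

Lemma orbit_limit_fixed z : Un_cv (fun n => d (u n) z) 0 -> Fix T d z.
Proof.
  intros Hz; unfold Fix.
  destruct (d_ge0 z (T z)) as [Ha | <-]; [exfalso | reflexivity].
  pose proof (proj2 phi_normal _ Ha) as Hphia.
  set (eta := Rmin (d z (T z)) (d z (T z) - phi (d z (T z))) / 2).
  assert (Heta : 0 < eta /\ 2 * eta <= d z (T z) /\ 2 * eta <= d z (T z) - phi (d z (T z))).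
  { unfold eta; pose proof (Rmin_l (d z (T z)) (d z (T z) - phi (d z (T z)))).
    pose proof (Rmin_r (d z (T z)) (d z (T z) - phi (d z (T z)))).
    pose proof (Rmin_glb_lt (d z (T z)) (d z (T z) - phi (d z (T z))) 0 Ha ltac:(lra)); repeat split; lra. }
  destruct (Un_cv_0_eventually_lt _ Hz eta (proj1 Heta)) as [N HN]; cbv beta in HN.
  pose proof (HN N ltac:(lia)); pose proof (HN (S N) ltac:(lia)).
  assert (Hsplit : d z (T z) <= d (u (S N)) z + d (T (u N)) (T z)).
  { rewrite <- u_orbit, (dC (u (S N)) z); apply d_triangle. }
  pose proof (contraction (u N) z).
  destruct (Gfun_near_point (u N) z) as [HG | HG]; [rewrite <- u_orbit; lra | |];
    rewrite HG in *.
  - pose proof (normal_le phi phi_normal _ (d_ge0 (u N) z)); lra.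
  - lra.
Qed.

End Orbit.
End Contraction.
End ReflexiveTriangularSymmetric.

Theorem theorem2 (X : Type) (x0 : X) (d : X -> X -> R) (T : X -> X)
  (g : Gchoice) (phi : R -> R) :
  is_symmetric d ->
  reflexive_triangular d ->
  zero_complete d ->
  maps_nonneg phi ->
  nearly_right_admissible phi ->
  asymptotic_normal phi ->
  (forall x y, d (T x) (T y) <= phi (Gfun g T d x y)) ->
  global_Picard T d.
Proof.
  intros Hsym Hrt Hcomplete _ Hnra Hasym Hc.
  assert (Horbit : forall x n, Nat.iter (S n) T x = T (Nat.iter n T x)) by reflexivity.
  assert (Hconv : forall x, zd_convergent d (fun n => Nat.iter n T x)).
  { intro x; apply Hcomplete.
    apply (orbit_zd_Cauchy d Hsym Hrt T g phi Hc _ (Horbit x) Hnra).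
    exact (orbit_steps_cv0 d Hsym Hrt T g phi (proj1 Hasym) Hc _ (Horbit x) Hasym). }
  assert (Hfix : forall x z, zd_converges_to d (fun n => Nat.iter n T x) z -> Fix T d z)
    by (intros x; exact (orbit_limit_fixed d Hsym Hrt T g phi (proj1 Hasym) Hc _ (Horbit x))).
  split; [intro x; split; eauto | split].
  - destruct (Hconv x0) as [z Hz]; eauto.
  - exact (fixed_points_dist0 d Hsym Hrt T g phi (proj1 Hasym) Hc).
Qed.
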